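(* Let $\kappa$ be a regular infinite cardinal, let $\mathscr{F},\mathscr{G}\subseteq[\kappa]^\kappa$, and let $\Pi=\{I_\alpha:\alpha<\kappa\}$ be an interval partition of $\kappa$. Then at least one of the following holds: (a) $\mathscr{F}$ is $\Pi$-scattered; (b) $\Pi$ is $\mathscr{G}$-scattered; (c) there exist $y\in\mathscr{F}$ and a non-decreasing function $h:\kappa\to\kappa$ such that $|h^{-1}(\{\alpha\})|<\kappa$ for every $\alpha<\kappa$, and the family $\{h[y\cap z]:z\in\mathscr{G}\}$ is unreaped.
   Context: For a regular cardinal $\kappa$, an interval partition of $\kappa$ is a family $\Pi=\{I_\alpha:\alpha<\kappa\}$ of pairwise disjoint non-empty intervals $I_\alpha=[\gamma_\alpha,\gamma_{\alpha+1})$ whose union is $\kappa$. A pair $(D,E)$ is a nice $\Pi$-orbit if each of $D$ and $E$ is a union of $\kappa$-many intervals of $\Pi$, no interval of $\Pi$ is contained in both, and no interval of $\Pi$ contained in $D$ is adjacent (i.e. of the form $I_\alpha,I_{\alpha+1}$ in either order) to an interval of $\Pi$ contained in $E$. A family $\mathscr{F}\subseteq[\kappa]^\kappa$ is $\Pi$-scattered if for every nice $\Pi$-orbit $(D,E)$ and every $y\in\mathscr{F}$, $|y\cap D|=|y\cap E|=\kappa$. $\Pi$ is $\mathscr{G}$-scattered if there exists a nice $\Pi$-orbit $(D,E)$ such that $|z\cap D|=|z\cap E|=\kappa$ for every $z\in\mathscr{G}$. A set $S\subseteq\kappa$ splits $B\subseteq\kappa$ if $|S\cap B|=|B\setminus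 S|=\kappa$. A family $\mathcal{A}$ of subsets of $\kappa$ is unreaped (an $\mathfrak{r}_\kappa$-family) if there is no $S\in[\kappa]^\kappa$ which splits every member of $\mathcal{A}$. $h[X]$ denotes the pointwise image $\{h(x):x\in X\}$. *)

(* A regular infinite cardinal kappa is represented by a type K
   (its set of elements = ordinals below kappa) with a strict well-order lt
   that is an initial ordinal, infinite and regular. *)
From Stdlib Require Import Classical.
Set Implicit Arguments.

Section Defs.
Variable K : Type.
Variable lt : K -> K -> Prop.

Definition le (a b : K) : Prop := lt a b \/ a = b.

(* |X| = kappa  (for X a subset of kappa: kappa injects into X) *)
Definition size_kappa (X : K -> Prop) : Prop :=
  exists f : K -> K, (forall a b, f a = f b -> a = b) /\ (forall a, X (f a)).

Definition small (X : K -> Prop) : Prop := ~ size_kappa X.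

Definition inter (X Y : K -> Prop) : K -> Prop := fun x => X x /\ Y x.
Definition diff (X Y : K -> Prop) : K -> Prop := fun x => X x /\ ~ Y x.
Definition subset (X Y : K -> Prop) : Prop := forall x, X x -> Y x.

Definition regular_infinite_cardinal : Prop :=
  (forall a, ~ lt a a) /\
  (forall a b c, lt a b -> lt b c -> lt a c) /\
  (forall a b, lt a b \/ a = b \/ lt b a) /\
  well_founded lt /\
  (exists g : nat -> K, forall m n, g m = g n -> m = n) /\
  (* a cardinal (initial ordinal): every proper initial segment has size < kappa *)
  (forall x, small (fun y => lt y x)) /\
  (* regular: every subset of size < kappa is bounded *)
  (forall X, small X -> exists b, forall x, X x -> lt x b).

Definition is_succ (a b : K) : Prop :=
  lt a b /\ forall c, lt a c -> lt c b -> False.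

Definition is_interval (X : K -> Prop) : Prop :=
  forall x y z, X x -> X z -> lt x y -> lt y z -> X y.

(* Pi = {I_alpha : alpha < kappa} is an interval partition of kappa;
   I alpha is the set I_alpha, listed in increasing order (I_alpha =
   [gamma_alpha, gamma_(alpha+1)) with gamma increasing). *)
Definition interval_partition (I : K -> K -> Prop) : Prop :=
  (forall a, exists x, I a x) /\
  (forall a, is_interval (I a)) /\
  (forall a b x, I a x -> I b x -> a = b) /\
  (forall x, exists a, I a x) /\
  (forall a b x y, lt a b -> I a x -> I b y -> lt x y).

Definition union_of_kappa_intervals (I : K -> K -> Prop) (D : K -> Prop) : Prop :=
  exists A : K -> Prop, size_kappa A /\
    (forall x, D x <-> exists a, A a /\ I a x).

Definition nice_orbit (I : K -> K -> Prop) (D E : K -> Prop) : Prop :=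
  union_of_kappa_intervals I D /\ union_of_kappa_intervals I E /\
  (forall a, ~ (subset (I a) D /\ subset (I a) E)) /\
  (forall a b, is_succ a b ->
     ~ (subset (I a) D /\ subset (I b) E) /\
     ~ (subset (I b) D /\ subset (I a) E)).

Definition Pi_scattered (I : K -> K -> Prop) (F : (K -> Prop) -> Prop) : Prop :=
  forall D E, nice_orbit I D E ->
    forall y, F y -> size_kappa (inter y D) /\ size_kappa (inter y E).

Definition partition_G_scattered (I : K -> K -> Prop) (G : (K -> Prop) -> Prop) : Prop :=
  exists D E, nice_orbit I D E /\
    forall z, G z -> size_kappa (inter z D) /\ size_kappa (inter z E).

Definition splits (S B : K -> Prop) : Prop :=
  size_kappa (inter S B) /\ size_kappa (diff B S).

Definition unreaped (A : (K -> Prop) -> Prop) : Prop :=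
  ~ exists S, size_kappa S /\ forall B, A B -> splits S B.

Definition image (h : K -> K) (X : K -> Prop) : K -> Prop :=
  fun w => exists x, X x /\ h x = w.

End Defs.

From Stdlib Require Import ClassicalEpsilon.
Set Implicit Arguments.
Unset Strict Implicit.

(* Suppose (D, E) is a nice orbit, y is in F and y meets E in fewer than kappa
   points, with E the union of the intervals I_a for a in A.  Let h send x to
   the least element of A at or above the index of the interval containing x.
   If some S split every h[y ∩ z] for z in G, then the union D' (resp. E') of
   the intervals I_a with a outside A and h-value in S (resp. not in S) would
   form a nice orbit: two adjacent intervals whose first index lies outside A
   have the same h-value.  Moreover every z in G meets D' and E' in kappa
   points, because y ∩ z lies outside E beyond some point, so Pi would be
   G-scattered. *)

Lemma size_kappa_mono (K : Type) (X Y : K -> Prop) :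
  subset X Y -> size_kappa X -> size_kappa Y.
Proof. intros HXY [g [Hg HgX]]. exists g. split; auto. Qed.

Lemma nat_injection_at (T : Type) (g : nat -> T) (a : T) :
  (forall m n, g m = g n -> m = n) ->
  exists g' : nat -> T, (forall m n, g' m = g' n -> m = n) /\ g' 0 = a.
Proof.
  intro Hg. destruct (classic (exists k, g k = a)) as [[k Hk]|Hnot].
  - exists (fun n => g (n + k)). split; [|exact Hk].
    intros m n E. apply Hg in E. now apply PeanoNat.Nat.add_cancel_r in E.
  - exists (fun n => match n with 0 => a | S n => g n end). split; [|reflexivity].
    intros [|m] [|n] E; auto; exfalso; apply Hnot; eauto.
Qed.

(* Hilbert's hotel: shift the sequence g one step and fix everything else. *)
Lemma shift_injection (T : Type) (g : nat -> T) :
  (forall m n, g m = g n -> m = n) ->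
  exists phi : T -> T, (forall x x', phi x = phi x' -> x = x') /\
    forall x, phi x <> g 0.
Proof.
  intro Hg.
  destruct (choice (fun x y => (exists n, x = g n /\ y = g (S n)) \/
                               ((forall n, x <> g n) /\ y = x))) as [phi Hphi].
  { intro x. destruct (classic (exists n, x = g n)) as [[n Hn]|Hn].
    - exists (g (S n)). left. eauto.
    - exists x. right. split; auto. intros n E. apply Hn. eauto. }
  exists phi. split.
  - intros x x' E.
    destruct (Hphi x) as [[n [Hx Hpx]]|[Hx Hpx]];
      destruct (Hphi x') as [[m [Hx' Hpx']]|[Hx' Hpx']]; rewrite Hpx, Hpx' in E.
    + apply Hg in E. injection E as ->. congruence.
    + exfalso. apply (Hx' (S n)). auto.
    + exfalso. apply (Hx (S m)). auto.
    + exact E.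
  - intros x E. destruct (Hphi x) as [[n [_ Hpx]]|[Hx Hpx]]; rewrite Hpx in E.
    + apply Hg in E. discriminate.
    + apply (Hx 0). exact E.
Qed.

Section Kappa.

Variables (K : Type) (lt : K -> K -> Prop).
Hypothesis Hk : regular_infinite_cardinal lt.

Lemma lt_irrefl a : ~ lt a a.
Proof. destruct Hk as (H & _). apply H. Qed.

Lemma lt_trans a b c : lt a b -> lt b c -> lt a c.
Proof. destruct Hk as (_ & H & _). apply H. Qed.

Lemma lt_trichotomy a b : lt a b \/ a = b \/ lt b a.
Proof. destruct Hk as (_ & _ & H & _). apply H. Qed.

Lemma le_trans a b c : le lt a b -> le lt b c -> le lt a c.
Proof.
  intros [Hab| ->] [Hbc| ->]; [left; exact (lt_trans Hab Hbc) | left | left | right]; auto.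
Qed.

Lemma le_lt_trans a b c : le lt a b -> lt b c -> lt a c.
Proof. intros [Hab| ->] Hbc; eauto using lt_trans. Qed.

Lemma lt_le_trans a b c : lt a b -> le lt b c -> lt a c.
Proof. intros Hab [Hbc| ->]; eauto using lt_trans. Qed.

Lemma le_not_lt a b : le lt a b -> ~ lt b a.
Proof. intros Hab Hba. exact (lt_irrefl (le_lt_trans Hab Hba)). Qed.

Lemma not_lt_le a b : ~ lt a b -> le lt b a.
Proof.
  intro H. destruct (lt_trichotomy a b) as [Hab|[->|Hba]];
    [contradiction | right | left]; auto.
Qed.

Lemma le_antisym a b : le lt a b -> le lt b a -> a = b.
Proof. intros Hab [Hba|Hba]; [exfalso; exact (le_not_lt Hab Hba) | auto]. Qed.

Lemma exists_le_both a b : exists m, le lt a m /\ le lt b m.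
Proof.
  destruct (lt_trichotomy a b) as [Hab|[->|Hba]].
  - exists b. split; [left | right]; auto.
  - exists b. split; right; auto.
  - exists a. split; [right | left]; auto.
Qed.

Lemma exists_least (P : K -> Prop) a :
  P a -> exists m, P m /\ forall x, P x -> ~ lt x m.
Proof.
  destruct Hk as (_ & _ & _ & Hwf & _). revert a.
  induction a as [a IH] using (well_founded_ind Hwf). intro Pa.
  destruct (classic (exists x, P x /\ lt x a)) as [[x [Px Hxa]]|Hnone].
  - exact (IH x Hxa Px).
  - exists a. split; auto. intros x Px Hxa. apply Hnone. eauto.
Qed.

Lemma size_kappa_unbounded (X : K -> Prop) :
  size_kappa X -> forall b, exists x, X x /\ ~ lt x b.
Proof.
  intros [g [Hg HgX]] b. destruct Hk as (_ & _ & _ & _ & _ & Hsmall & _).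
  apply NNPP. intro Hbounded. apply (Hsmall b). exists g. split; auto.
  intro a. apply NNPP. intro Hga. apply Hbounded. exists (g a). auto.
Qed.

Lemma unbounded_size_kappa (X : K -> Prop) :
  (forall b, exists x, X x /\ ~ lt x b) -> size_kappa X.
Proof.
  intro H. destruct Hk as (_ & _ & _ & _ & _ & _ & Hreg). apply NNPP. intro Hsmall.
  destruct (Hreg X Hsmall) as [b Hb]. destruct (H b) as [x [Xx Hxb]]. auto.
Qed.

(* A maximum a would let a shift injection of kappa into kappa \ {a} land in
   the small initial segment below a. *)
Lemma exists_gt a : exists b, lt a b.
Proof.
  destruct Hk as (_ & _ & _ & _ & [g Hg] & Hsmall & _).
  apply NNPP. intro Hmax.
  destruct (nat_injection_at a Hg) as [g' [Hg' Hg'0]].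
  destruct (shift_injection Hg') as [phi [Hphi Hphi0]].
  apply (Hsmall a). exists phi. split; [exact Hphi|]. intro x.
  destruct (lt_trichotomy (phi x) a) as [H|[H|H]]; auto.
  - exfalso. apply (Hphi0 x). congruence.
  - exfalso. apply Hmax. eauto.
Qed.

Section Ceiling.

Variable A : K -> Prop.
Hypothesis HA : size_kappa A.

Lemma exists_ceil a :
  exists c, A c /\ le lt a c /\ forall a', A a' -> le lt a a' -> le lt c a'.
Proof.
  destruct (size_kappa_unbounded HA a) as [c0 [Ac0 Hc0]].
  destruct (exists_least (P := fun c => A c /\ ~ lt c a) (conj Ac0 Hc0))
    as [c [[Ac Hc] Hmin]].
  exists c. repeat split; auto using not_lt_le.
  intros a' Aa' Haa'. apply not_lt_le. intro Ha'c.
  apply (Hmin a'); auto. split; auto using le_not_lt.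
Qed.

Definition ceil (a : K) : K :=
  proj1_sig (constructive_indefinite_description _ (exists_ceil a)).

Lemma ceil_spec a :
  A (ceil a) /\ le lt a (ceil a) /\ forall a', A a' -> le lt a a' -> le lt (ceil a) a'.
Proof. exact (proj2_sig (constructive_indefinite_description _ (exists_ceil a))). Qed.

Lemma ceil_in a : A (ceil a).
Proof. apply ceil_spec. Qed.

Lemma le_ceil a : le lt a (ceil a).
Proof. apply ceil_spec. Qed.

Lemma ceil_least a a' : A a' -> le lt a a' -> le lt (ceil a) a'.
Proof. apply ceil_spec. Qed.

Lemma ceil_monotone a b : le lt a b -> le lt (ceil a) (ceil b).
Proof. intro Hab. apply ceil_least; [apply ceil_in | exact (le_trans Hab (le_ceil b))]. Qed.

Lemma ceil_succ a b : is_succ lt a b -> ~ A a -> ceil a = ceil b.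
Proof.
  intros [Hab Hnext] Aa.
  assert (Hlt : lt a (ceil a)).
  { destruct (le_ceil a) as [H|H]; auto. exfalso. apply Aa. rewrite H. apply ceil_in. }
  apply le_antisym.
  - apply ceil_least; [apply ceil_in|]. left. eauto using lt_le_trans, le_ceil.
  - apply ceil_least; [apply ceil_in|]. apply not_lt_le. intro H. exact (Hnext _ Hlt H).
Qed.

End Ceiling.

Section Partition.

Variable I : K -> K -> Prop.
Hypothesis HI : interval_partition lt I.

Lemma interval_nonempty a : exists x, I a x.
Proof. destruct HI as (H & _). apply H. Qed.

Lemma interval_cover x : exists a, I a x.
Proof. destruct HI as (_ & _ & _ & H & _). apply H. Qed.

Lemma interval_lt a b x x' : lt a b -> I a x -> I b x' -> lt x x'.
Proof. destruct HI as (_ & _ & _ & _ & H). apply H. Qed.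

Definition index (x : K) : K :=
  proj1_sig (constructive_indefinite_description _ (interval_cover x)).

Lemma I_index x : I (index x) x.
Proof. exact (proj2_sig (constructive_indefinite_description _ (interval_cover x))). Qed.

Lemma index_eq a x : I a x -> index x = a.
Proof. destruct HI as (_ & _ & H & _). intro Hax. exact (H _ _ _ (I_index x) Hax). Qed.

Lemma index_monotone x x' : le lt x x' -> le lt (index x) (index x').
Proof.
  intro Hxx'. apply not_lt_le. intro H.
  exact (le_not_lt Hxx' (interval_lt H (I_index x') (I_index x))).
Qed.

Lemma index_bounded a : exists p, forall x, le lt (index x) a -> lt x p.
Proof.
  destruct (exists_gt a) as [b Hab]. destruct (interval_nonempty b) as [p Hp].
  exists p. intros x Hx. exact (interval_lt (le_lt_trans Hx Hab) (I_index x) Hp).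
Qed.

Lemma union_index_preimage (P : K -> Prop) :
  size_kappa (fun x => P (index x)) ->
  union_of_kappa_intervals I (fun x => P (index x)).
Proof.
  intro HP. exists P. split.
  - apply unbounded_size_kappa. intro b. destruct (interval_nonempty b) as [p Hp].
    destruct (size_kappa_unbounded HP p) as [x [Px Hxp]].
    exists (index x). split; auto. intro H. exact (Hxp (interval_lt H (I_index x) Hp)).
  - intro x. split.
    + intro Px. exists (index x). split; auto using I_index.
    + intros [a [Pa Hax]]. rewrite (index_eq Hax). exact Pa.
Qed.

Lemma subset_index_preimage (P : K -> Prop) a :
  subset (I a) (fun x => P (index x)) -> P a.
Proof.
  intro H. destruct (interval_nonempty a) as [x Hx].
  rewrite <- (index_eq Hx). exact (H x Hx).
Qed.

Section Gaps.

Variable A : K -> Prop.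
Hypothesis HA : size_kappa A.

Let h (x : K) : K := ceil HA (index x).

Lemma h_monotone x x' : le lt x x' -> le lt (h x) (h x').
Proof. intro H. apply ceil_monotone, index_monotone, H. Qed.

Lemma h_fiber_small a : small (fun x => h x = a).
Proof.
  intro Hfib. destruct (index_bounded a) as [p Hp].
  destruct (size_kappa_unbounded Hfib p) as [x [Hx Hxp]].
  apply Hxp, Hp. rewrite <- Hx. apply le_ceil.
Qed.

Definition gap (U : K -> Prop) (a : K) : Prop := ~ A a /\ U (ceil HA a).

Let gap_part (U : K -> Prop) (x : K) : Prop := gap U (index x).

Lemma gap_part_nice (U : K -> Prop) :
  size_kappa (gap_part U) -> size_kappa (gap_part (fun w => ~ U w)) ->
  nice_orbit lt I (gap_part U) (gap_part (fun w => ~ U w)).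
Proof.
  intros HU HnU.
  split; [exact (union_index_preimage (P := gap U) HU)|].
  split; [exact (union_index_preimage (P := gap (fun w => ~ U w)) HnU)|].
  split.
  - intros a [Ha Ha']. apply subset_index_preimage in Ha, Ha'.
    exact (proj2 Ha' (proj2 Ha)).
  - intros a b Hab. split; intros [Ha Hb];
      apply subset_index_preimage in Ha, Hb.
    + destruct Ha as [Aa Ua]. rewrite (ceil_succ HA Hab Aa) in Ua. exact (proj2 Hb Ua).
    + destruct Hb as [Aa nUa]. rewrite (ceil_succ HA Hab Aa) in nUa. exact (nUa (proj2 Ha)).
Qed.

Variables (E y : K -> Prop).
Hypothesis HAE : forall x, A (index x) -> E x.
Hypothesis HyE : small (inter y E).

(* Beyond a bound of y ∩ E, every point of y lies in an interval outside A. *)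
Lemma gap_part_meets (U z : K -> Prop) :
  size_kappa (inter U (image h (inter y z))) -> size_kappa (inter z (gap_part U)).
Proof.
  intro HU. destruct Hk as (_ & _ & _ & _ & _ & _ & Hreg).
  destruct (Hreg _ HyE) as [e He].
  apply unbounded_size_kappa. intro c.
  destruct (exists_le_both c e) as [m [Hcm Hem]].
  destruct (exists_gt (h m)) as [b Hb].
  destruct (size_kappa_unbounded HU b) as [w [[Uw [x [[yx zx] <-]]] Hwb]].
  assert (Hmx : ~ lt x m).
  { intro H. apply Hwb. apply le_lt_trans with (h m); auto. apply h_monotone. left. exact H. }
  exists x. repeat split; auto.
  - intro Ax. apply Hmx. apply lt_le_trans with e; auto. apply He. split; auto.
  - intro H. apply Hmx. eauto using lt_le_trans.
Qed.

Lemma G_scattered_of_reaped (G : (K -> Prop) -> Prop) (z0 S : K -> Prop) :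
  G z0 -> (forall z, G z -> splits S (image h (inter y z))) ->
  partition_G_scattered lt I G.
Proof.
  intros Gz0 HS.
  assert (Hmeets : forall z, G z ->
    size_kappa (inter z (gap_part S)) /\
    size_kappa (inter z (gap_part (fun w => ~ S w)))).
  { intros z Gz. destruct (HS z Gz) as [HSin HSout]. split; apply gap_part_meets.
    - exact HSin.
    - revert HSout. apply size_kappa_mono. intros w [Bw Sw]. split; auto. }
  exists (gap_part S), (gap_part (fun w => ~ S w)). split; [|exact Hmeets].
  destruct (Hmeets z0 Gz0) as [HD HE].
  apply gap_part_nice; [revert HD | revert HE]; apply size_kappa_mono; intros x [_ Hx]; exact Hx.
Qed.

End Gaps.

Lemma unreaped_alternative (G : (K -> Prop) -> Prop) (D E y : K -> Prop) :
  nice_orbit lt I D E -> small (inter y E) -> ~ partition_G_scattered lt I G ->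
  exists h : K -> K,
    (forall a b, le lt a b -> le lt (h a) (h b)) /\
    (forall a, small (fun x => h x = a)) /\
    unreaped (fun B => exists z, G z /\ B = image h (inter y z)).
Proof.
  intros Hnice HyE HnotG.
  pose proof Hnice as (_ & [A [HA HEA]] & _).
  assert (HAE : forall x, A (index x) -> E x).
  { intros x Ax. apply HEA. exists (index x). split; auto using I_index. }
  exists (fun x => ceil HA (index x)).
  split; [apply h_monotone|]. split; [apply h_fiber_small|].
  intros [S [_ HS]]. apply HnotG.
  destruct (classic (exists z, G z)) as [[z0 Gz0]|Hempty].
  - apply (G_scattered_of_reaped (HA := HA) HAE HyE Gz0 (S := S)).
    intros z Gz. apply HS. eauto.
  - exists D, E. split; [assumption|]. intros z Gz. exfalso. eauto.
Qed.

End Partition.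

End Kappa.

Lemma nice_orbit_sym (K : Type) (lt : K -> K -> Prop) I D E :
  nice_orbit lt I D E -> nice_orbit lt I E D.
Proof.
  intros (HD & HE & Hdisj & Hadj). split; [exact HE|]. split; [exact HD|]. split.
  - intros a [Ha Ha']. exact (Hdisj a (conj Ha' Ha)).
  - intros a b Hab. destruct (Hadj a b Hab) as [H1 H2].
    split; intros [Ha Hb]; [apply H2 | apply H1]; split; assumption.
Qed.

Lemma not_Pi_scattered (K : Type) (lt : K -> K -> Prop) I F :
  ~ Pi_scattered lt I F ->
  exists D E y, nice_orbit lt I D E /\ F y /\ small (inter y E).
Proof.
  intro H. apply NNPP. intro Hnone. apply H. intros D E Hnice y Fy.
  split; apply NNPP; intro Hsmall; apply Hnone.
  - exists E, D, y. split; [apply nice_orbit_sym, Hnice | split; assumption].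
  - exists D, E, y. split; [exact Hnice | split; assumption].
Qed.

Theorem theorem2p6 (K : Type) (lt : K -> K -> Prop)
  (Hkappa : regular_infinite_cardinal lt)
  (F G : (K -> Prop) -> Prop)
  (HF : forall y, F y -> size_kappa y)
  (HG : forall z, G z -> size_kappa z)
  (I : K -> K -> Prop) (HI : interval_partition lt I) :
  Pi_scattered lt I F \/
  partition_G_scattered lt I G \/
  (exists y (h : K -> K), F y /\
     (forall a b, le lt a b -> le lt (h a) (h b)) /\
     (forall a, small (fun x => h x = a)) /\
     unreaped (fun B => exists z, G z /\ B = image h (inter y z))).
Proof.
  destruct (classic (Pi_scattered lt I F)) as [Ha|Ha]; [left; exact Ha|right].
  destruct (classic (partition_G_scattered lt I G)) as [Hb|Hb]; [left; exact Hb|right].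
  destruct (not_Pi_scattered Ha) as (D & E & y & Hnice & Fy & HyE).
  destruct (unreaped_alternative Hkappa HI Hnice HyE Hb) as [h Hh].
  exists y, h. split; [exact Fy | exact Hh].
Qed.
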